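(* For every graph $G$ with $n$ vertices, $P(G,m)-P_{DP}(G,m)=O(m^{n-2})$ as $m\to\infty$.
   Context: All graphs are finite and simple. $P(G,m)$ denotes the chromatic polynomial of $G$. A cover of a graph $G$ is a pair $\mathcal{H}=(L,H)$ where $H$ is a graph and $L:V(G)\to\mathcal{P}(V(H))$ satisfies: (1) the sets $L(u)$, $u\in V(G)$, partition $V(H)$; (2) for every $u$, $H[L(u)]$ is complete; (3) if $E_H(L(u),L(v))\neq\emptyset$ then $u=v$ or $uv\in E(G)$; (4) if $uv\in E(G)$ then $E_H(L(u),L(v))$ is a matching (possibly empty). Here $E_H(S,U)$ is the set of edges of $H$ between $S$ and $U$. The cover is $m$-fold if $|L(u)|=m$ for all $u$. An $\mathcal{H}$-coloring is an independent set of $H$ of size $|V(G)|$. $P_{DP}(G,\mathcal{H})$ is the number of $\mathcal{H}$-colorings, and $P_{DP}(G,m)$ is the minimum of $P_{DP}(G,\mathcal{H})$ over all $m$-fold covers $\mathcal{H}$ of $G$. *)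

From HB Require Import structures.
From mathcomp Require Import all_boot all_order all_algebra.
Set Implicit Arguments. Unset Strict Implicit. Unset Printing Implicit Defensive.

(* A finite simple graph G on vertex set 'I_n is a relation e : rel 'I_n,
   assumed symmetric and irreflexive (hypotheses of the theorem). *)

Definition chrom_poly (n : nat) (e : rel 'I_n) (m : nat) : nat :=
  #|[set f : {ffun 'I_n -> 'I_m} | [forall u, forall v, e u v ==> (f u != f v)]]|.

(* An m-fold cover (L, H): up to isomorphism, V(H) = 'I_n * 'I_m with
   L(u) = {u} x 'I_m.  H is given by its (ordered-pair) edge set EH. *)
Definition is_mcover (n m : nat) (e : rel 'I_n)
    (EH : {set ('I_n * 'I_m) * ('I_n * 'I_m)}) : bool :=
  [&&
      [forall x, forall y, ((x, y) \in EH) ==> ((y, x) \in EH)],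
      [forall x, (x, x) \notin EH],
      [forall u, forall i, forall j, (i != j) ==> (((u, i), (u, j)) \in EH)],
      [forall u, forall v, forall i, forall j,
         ((u != v) && (((u, i), (v, j)) \in EH)) ==> e u v] &
      [forall u, forall v, e u v ==>
         [&& [forall i, forall j, forall j',
               ((((u, i), (v, j)) \in EH) && (((u, i), (v, j')) \in EH)) ==> (j == j')] &
             [forall i, forall i', forall j,
               ((((u, i), (v, j)) \in EH) && (((u, i'), (v, j)) \in EH)) ==> (i == i')]]]].

(* Number of H-colourings: independent sets of H of size |V(G)| = n. *)
Definition num_cover_colorings (n m : nat)
    (EH : {set ('I_n * 'I_m) * ('I_n * 'I_m)}) : nat :=
  #|[set I : {set 'I_n * 'I_m} |
      (#|I| == n) && [forall x in I, forall y in I, (x, y) \notin EH]]|.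

(* The default value
   2^(n*m) (= number of subsets of V(H)) is an upper bound of every count,
   and m-fold covers always exist, so this is the true minimum. *)
Definition dp_chrom (n : nat) (e : rel 'I_n) (m : nat) : nat :=
  \big[minn/2 ^ (n * m)]_(EH : {set ('I_n * 'I_m) * ('I_n * 'I_m)} | is_mcover e EH)
     num_cover_colorings EH.

From HB Require Import structures.
From mathcomp Require Import all_boot all_order all_algebra.
From mathcomp Require Import zify.
Import Order.TTheory GRing.Theory Num.Theory.

Set Implicit Arguments.
Unset Strict Implicit.
Unset Printing Implicit Defensive.

(* Let K be the number of ordered pairs of distinct edges
   of G.  We show P_DP(G, m) <= P(G, m) <= P_DP(G, m) + K * m ^ (n - 2).
   - Upper bound: the canonical cover, where (u, i) ~ (v, i) for every edge
     uv, has exactly P(G, m) colorings.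
   - Lower bound: fix an m-fold cover H.  Its colorings are the graphs of
     the maps f : V(G) -> [m] whose lift has no conflict, i.e. no edge uv
     of G with (u, f u) ~ (v, f v) in H.  By the matching condition, a given
     edge is a conflict for at most as many f as it is monochromatic for.
     A union bound on conflicts, compared with the degree-two Bonferroni
     bound on monochromatic edges, leaves an error of at most the number
     of (f, pair of distinct monochromatic edges), which is K * m ^ (n - 2)
     since two distinct edges force the colors of two vertices. *)

Section FiniteCounting.
Variables (T X : finType).

Definition offdiag (A : {set X}) : {set X * X} :=
  [set pq in setX A A | pq.1 != pq.2].

Lemma card_le_offdiag (A : {set X}) : #|A| <= (A != set0) + #|offdiag A|.
Proof.
have [->|[x0 Ax0]] := set_0Vmem A; first by rewrite cards0.
have -> : A != set0 by apply/set0Pn; exists x0.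
rewrite (cardsD1 x0) Ax0 ltnS -(card_imset _ (fun y z (h : (x0, y) = (x0, z)) => congr1 snd h)).
apply/subset_leq_card/subsetP => _ /imsetP[y /setD1P[y_x0 Ay] ->].
by rewrite !inE /= Ax0 Ay eq_sym.
Qed.

Lemma offdiagS (A B : {set X}) : A \subset B -> offdiag A \subset offdiag B.
Proof.
move=> sAB; apply/subsetP => pq; rewrite !inE => /andP[/andP[Ap Aq] ->].
by rewrite !(subsetP sAB).
Qed.

Variable S : T -> {set X}.

Lemma double_count : \sum_t #|S t| = \sum_x #|[set t | x \in S t]|.
Proof.
transitivity (\sum_t \sum_x (x \in S t : nat)).
  by apply: eq_bigr => t _; rewrite -sum1_card big_mkcond.
rewrite exchange_big; apply: eq_bigr => x _.
by rewrite -sum1_card [RHS]big_mkcond; apply: eq_bigr => t _; rewrite inE.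
Qed.

Lemma card_nonempty : #|~: [set t | S t == set0]| = \sum_t (S t != set0).
Proof.
by rewrite -sum1_card big_mkcond; apply: eq_bigr => t _; rewrite !inE.
Qed.

End FiniteCounting.

Section DeterminedFunctions.
Variables (n m : nat) (w1 w2 : 'I_n).
Hypothesis w12 : w1 != w2.

Definition outside : {set 'I_n} := ~: [set w1; w2].

Lemma card_outside : #|outside| = n - 2.
Proof. by rewrite cardsCs setCK cards2 w12 card_ord. Qed.

Lemma card_determined (S : {set {ffun 'I_n -> 'I_m}}) :
  {in S &, forall f g : {ffun 'I_n -> 'I_m}, {in outside, f =1 g} -> f = g} ->
  #|S| <= m ^ (n - 2).
Proof.
move=> detS.
pose restrict (f : {ffun 'I_n -> 'I_m}) : {ffun {x | x \in outside} -> 'I_m} :=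
  [ffun x => f (val x)].
rewrite -(card_in_imset (f := restrict)); last first.
  move=> f g Sf Sg /ffunP eq_fg; apply: detS => // x x_out.
  by have := eq_fg (exist _ x x_out); rewrite !ffunE.
apply: leq_trans (max_card _) _.
by rewrite card_ffun card_ord card_sig card_outside.
Qed.

Lemma card_two_forced (a1 a2 : 'I_n) : a1 \in outside -> a2 \in outside ->
  #|[set f : {ffun 'I_n -> 'I_m} | (f w1 == f a1) && (f w2 == f a2)]| <= m ^ (n - 2).
Proof.
move=> a1_out a2_out; apply: card_determined => f g.
rewrite !inE => /andP[/eqP f1 /eqP f2] /andP[/eqP g1 /eqP g2] eq_out.
apply/ffunP => x; have [->|xw1] := eqVneq x w1; first by rewrite f1 g1 eq_out.
have [->|xw2] := eqVneq x w2; first by rewrite f2 g2 eq_out.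
by apply: eq_out; rewrite !inE negb_or xw1 xw2.
Qed.

End DeterminedFunctions.

Lemma ord_lt_neq (n : nat) (u v : 'I_n) : u < v -> u != v.
Proof. by move=> lt_uv; rewrite -val_eqE neq_ltn lt_uv. Qed.

Lemma private_endpoint (n : nat) (u1 v1 u2 v2 : 'I_n) :
  u1 < v1 -> u2 < v2 -> (u1, v1) != (u2, v2) ->
  exists w a, [/\ (w, a) \in [:: (u1, v1); (v1, u1)], w != u2 & w != v2].
Proof.
move=> lt1 lt2 ne12.
have [/andP[u1u2 u1v2]|u1_on_2] := boolP ((u1 != u2) && (u1 != v2)).
  by exists u1, v1; rewrite mem_head.
exists v1, u1; split; first by rewrite !inE eqxx orbT.
all: move: ne12 u1_on_2; rewrite xpair_eqE -!val_eqE /=; lia.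
Qed.

Section Conflicts.
Variables (n m : nat) (e : rel 'I_n).

Definition edges : {set 'I_n * 'I_n} := [set p : 'I_n * 'I_n | (p.1 < p.2) && e p.1 p.2].

Definition mono (f : {ffun 'I_n -> 'I_m}) : {set 'I_n * 'I_n} :=
  [set p in edges | f p.1 == f p.2].

Lemma chrom_poly_mono : symmetric e -> irreflexive e ->
  chrom_poly e m = #|[set f | mono f == set0]|.
Proof.
move=> esym eirr; apply: eq_card => f; rewrite !inE.
apply/forallP/eqP => [proper | mono0].
  apply/setP => -[u v]; rewrite !inE /=; apply/negP => /andP[/andP[_ euv] /eqP fuv].
  by have /forallP/(_ v) := proper u; rewrite euv fuv eqxx.
move=> u; apply/forallP => v; apply/implyP => euv; apply/eqP => fuv.
have [ltuv|ltvu|/val_inj eq_uv] := ltngtP u v.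
- by have := mono0; move/setP/(_ (u, v)); rewrite !inE /= ltuv euv fuv eqxx.
- by have := mono0; move/setP/(_ (v, u)); rewrite !inE /= ltvu esym euv fuv eqxx.
- by move: euv; rewrite eq_uv eirr.
Qed.

Lemma card_two_mono (p q : 'I_n * 'I_n) : (p, q) \in offdiag edges ->
  #|[set f | (p, q) \in offdiag (mono f)]| <= m ^ (n - 2).
Proof.
case: p q => [u1 v1] [u2 v2]; rewrite !inE /= => /andP[/andP[/andP[lt1 _] /andP[lt2 _]] ne12].
have [w1 [a1 [wa1 w1u2 w1v2]]] := private_endpoint lt1 lt2 ne12.
have ne21 : (u2, v2) != (u1, v1) by rewrite eq_sym.
have [w2 [a2 [wa2 w2u1 w2v1]]] := private_endpoint lt2 lt1 ne21.
have oriented (w a u v : 'I_n) (f : {ffun 'I_n -> 'I_m}) :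
    (w, a) \in [:: (u, v); (v, u)] -> (f w == f a) = (f u == f v).
  by rewrite !inE => /orP[] /eqP[-> ->] //; rewrite eq_sym.
(* w1 avoids the second edge, which contains w2; a1 lies on the first
   edge, which w2 avoids; symmetrically for a2. *)
have [w12 a1_out a2_out] : [/\ w1 != w2, a1 \in outside w1 w2 & a2 \in outside w1 w2].
  move: wa1 wa2 w1u2 w1v2 w2u1 w2v1 lt1 lt2; rewrite !inE.
  by move=> /orP[] /eqP[-> ->] /orP[] /eqP[-> ->]; rewrite -!val_eqE /= => *; split; lia.
apply: leq_trans (card_two_forced m w12 a1_out a2_out).
apply/subset_leq_card/subsetP => f.
rewrite !inE /= (oriented _ _ _ _ _ wa1) (oriented _ _ _ _ _ wa2).
by case/andP=> /andP[/andP[_ -> ] /andP[_ ->]].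
Qed.

Lemma mono_sub_edges (f : {ffun 'I_n -> 'I_m}) : mono f \subset edges.
Proof. by apply/subsetP => p; rewrite inE => /andP[]. Qed.

Lemma sum_offdiag_mono :
  \sum_(f : {ffun 'I_n -> 'I_m}) #|offdiag (mono f)| <= #|offdiag edges| * m ^ (n - 2).
Proof.
rewrite double_count -sum_nat_const (bigID (mem (offdiag edges))) /=.
rewrite [X in _ + X]big1 ?addn0; first by apply: leq_sum => -[p q]; apply: card_two_mono.
move=> pq pq_out; apply/eqP; rewrite cards_eq0; apply/eqP/setP => f; rewrite inE in_set0.
by apply: contraNF pq_out; apply: (subsetP (offdiagS (mono_sub_edges f))).
Qed.

End Conflicts.

Definition graph_of (n m : nat) (f : {ffun 'I_n -> 'I_m}) : {set 'I_n * 'I_m} :=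
  [set (u, f u) | u : 'I_n].

Lemma card_graph_of (n m : nat) (f : {ffun 'I_n -> 'I_m}) : #|graph_of f| = n.
Proof. by rewrite card_imset ?card_ord // => u v []. Qed.

Lemma graph_of_inj (n m : nat) : injective (@graph_of n m).
Proof.
move=> f g eq_fg; apply/ffunP => u.
have : (u, f u) \in graph_of g by rewrite -eq_fg imset_f.
by case/imsetP => v _ [-> ->].
Qed.

Lemma transversal_graph (n m : nat) (I : {set 'I_n * 'I_m}) :
  {in I &, injective fst} -> #|I| = n -> exists f, I = graph_of f.
Proof.
move=> fst_inj cardI.
have fst_onto : fst @: I = setT.
  by apply/eqP; rewrite eqEcard subsetT card_in_imset // cardI cardsT card_ord leqnn.
have fibre u : exists i, (u, i) \in I.
  have : u \in fst @: I by rewrite fst_onto inE.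
  by case/imsetP => -[v i] Ivi /= ->; exists i.
exists [ffun u => xchoose (fibre u)]; apply/eqP.
rewrite eq_sym eqEcard card_graph_of cardI leqnn andbT.
by apply/subsetP => _ /imsetP[u _ ->]; rewrite ffunE (xchooseP (fibre u)).
Qed.

Section Covers.
Variables (n m : nat) (e : rel 'I_n) (EH : {set ('I_n * 'I_m) * ('I_n * 'I_m)}).
Hypothesis cover : is_mcover e EH.

Lemma cover_sym x y : (x, y) \in EH -> (y, x) \in EH.
Proof. by case/and5P: cover => /forallP/(_ x)/forallP/(_ y)/implyP. Qed.

Lemma cover_irr x : (x, x) \notin EH.
Proof. by case/and5P: cover => _ /forallP. Qed.

Lemma cover_clique u i j : i != j -> ((u, i), (u, j)) \in EH.
Proof.
case/and5P: cover => _ _ /forallP/(_ u)/forallP/(_ i)/forallP/(_ j)/implyP clique _ _.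
exact: clique.
Qed.

Lemma cover_over_edges u v i j : u != v -> ((u, i), (v, j)) \in EH -> e u v.
Proof.
move=> uv Euv; case/and5P: cover => _ _ _ /forallP/(_ u)/forallP/(_ v) over _.
by have /forallP/(_ i)/forallP/(_ j)/implyP := over; apply; rewrite uv.
Qed.

Lemma cover_matching u v i j j' :
  e u v -> ((u, i), (v, j)) \in EH -> ((u, i), (v, j')) \in EH -> j = j'.
Proof.
move=> euv Ej Ej'; case/and5P: cover => _ _ _ _ /forallP/(_ u)/forallP/(_ v)/implyP/(_ euv).
case/andP => /forallP/(_ i)/forallP/(_ j)/forallP/(_ j')/implyP match_uv _.
by apply/eqP/match_uv; rewrite Ej.
Qed.

Definition conflicts (f : {ffun 'I_n -> 'I_m}) : {set 'I_n * 'I_n} :=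
  [set p in edges e | ((p.1, f p.1), (p.2, f p.2)) \in EH].

Lemma cover_colorings_graph : num_cover_colorings EH =
  #|[set f : {ffun 'I_n -> 'I_m} | [forall u, forall v, ((u, f u), (v, f v)) \notin EH]]|.
Proof.
rewrite -(card_imset _ (@graph_of_inj n m)); apply: eq_card => I; rewrite inE.
apply/andP/imsetP => [[/eqP cardI /forall_inP indep] | [f]].
  have {}indep x y : x \in I -> y \in I -> (x, y) \notin EH.
    by move=> Ix Iy; have /forall_inP := indep x Ix; apply.
  have fst_inj : {in I &, injective fst}.
    move=> [u i] [v j] Iui Ivj /= eq_uv; rewrite -{}eq_uv in Ivj *.
    have [->//|ij] := eqVneq i j.
    by have := indep _ _ Iui Ivj; rewrite cover_clique.
  have [f defI] := transversal_graph fst_inj cardI.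
  exists f => //; rewrite inE; apply/forallP => u; apply/forallP => v.
  by apply: indep; rewrite defI imset_f.
rewrite inE => /forallP indep ->; rewrite card_graph_of eqxx.
split=> //; apply/forall_inP => _ /imsetP[u _ ->]; apply/forall_inP => _ /imsetP[v _ ->].
by have /forallP := indep u; apply.
Qed.

Lemma independent_lift (f : {ffun 'I_n -> 'I_m}) :
  [forall u, forall v, ((u, f u), (v, f v)) \notin EH] = (conflicts f == set0).
Proof.
apply/forallP/eqP => [indep | no_conflict u].
  apply/setP => -[u v]; rewrite !inE /=; apply/negP => /andP[_ Euv].
  by have /forallP/(_ v) := indep u; rewrite Euv.
apply/forallP => v; apply/negP => Euv.
have [ltuv|ltvu|/val_inj eq_uv] := ltngtP u v.
- have e_uv := cover_over_edges (ord_lt_neq ltuv) Euv.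
  by have /setP/(_ (u, v)) := no_conflict; rewrite !inE /= ltuv e_uv Euv.
- have Evu := cover_sym Euv; have e_vu := cover_over_edges (ord_lt_neq ltvu) Evu.
  by have /setP/(_ (v, u)) := no_conflict; rewrite !inE /= ltvu e_vu Evu.
- by move: Euv; rewrite eq_uv (negbTE (cover_irr _)).
Qed.

(* Along a fixed edge uv, the colorings whose lift is an H-edge are at most
   as many as the colorings making uv monochromatic: recoloring v with the
   color of u is injective on the former, by the matching condition. *)
Lemma card_conflict_edge (p : 'I_n * 'I_n) :
  #|[set f | p \in conflicts f]| <= #|[set f : {ffun 'I_n -> 'I_m} | p \in mono e f]|.
Proof.
case: p => u v; have [edge_uv|not_edge] := boolP ((u, v) \in edges e); last first.
  rewrite (_ : [set f | _] = set0) ?cards0 //.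
  apply/setP => f; rewrite in_set0 in_set /conflicts in_set.
  by apply: contraNF not_edge => /andP[].
have uv : u != v by move: edge_uv; rewrite inE => /andP[/ord_lt_neq].
pose recolor (f : {ffun 'I_n -> 'I_m}) := [ffun x => if x == v then f u else f x].
rewrite -(card_in_imset (f := recolor)); last first.
  move=> f g; rewrite !inE /= => /andP[_ Ef] /andP[/andP[_ e_uv] Eg] eq_fg.
  have agree x : x != v -> f x = g x.
    by move=> xv; have /ffunP/(_ x) := eq_fg; rewrite !ffunE (negbTE xv).
  apply/ffunP => x; have [->|/agree//] := eqVneq x v.
  by apply: (cover_matching e_uv Ef); rewrite (agree u uv).
apply/subset_leq_card/subsetP => _ /imsetP[f _ ->].
by rewrite in_set /mono in_set edge_uv /= !ffunE eqxx (negbTE uv).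
Qed.

(* Colorings with a conflicting edge are at most as many as improper
   colorings, up to #(pairs of distinct edges) * m ^ (n - 2): a union bound
   for the former against a second-order Bonferroni bound for the latter. *)
Lemma card_conflicting_le :
  #|~: [set f | conflicts f == set0]| <=
  #|~: [set f : {ffun 'I_n -> 'I_m} | mono e f == set0]| + #|offdiag (edges e)| * m ^ (n - 2).
Proof.
rewrite !card_nonempty.
apply: (@leq_trans (\sum_f #|conflicts f|)).
  by apply: leq_sum => f _; rewrite -card_gt0; case: #|_|.
rewrite double_count.
apply: (@leq_trans (\sum_p #|[set f : {ffun 'I_n -> 'I_m} | p \in mono e f]|)).
  by apply: leq_sum => p _; apply: card_conflict_edge.
rewrite -(double_count (mono e)).
apply: (@leq_trans (\sum_f ((mono e f != set0) + #|offdiag (mono e f)|))).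
  by apply: leq_sum => f _; apply: card_le_offdiag.
by rewrite big_split leq_add2l sum_offdiag_mono.
Qed.

Lemma chrom_poly_le_cover : symmetric e -> irreflexive e ->
  chrom_poly e m <= num_cover_colorings EH + #|offdiag (edges e)| * m ^ (n - 2).
Proof.
move=> esym eirr.
have proper := cardsC [set f : {ffun 'I_n -> 'I_m} | mono e f == set0].
have lifted := cardsC [set f | conflicts f == set0].
have -> : num_cover_colorings EH = #|[set f | conflicts f == set0]|.
  by rewrite cover_colorings_graph; apply: eq_card => f; rewrite !inE independent_lift.
rewrite chrom_poly_mono // -(leq_add2r #|~: [set f | conflicts f == set0]|).
by rewrite addnAC lifted -proper -addnA leq_add2l card_conflicting_le.
Qed.

End Covers.

Section CanonicalCover.
Variables (n m : nat) (e : rel 'I_n).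
Hypotheses (esym : symmetric e) (eirr : irreflexive e).

Definition canonical_cover : {set ('I_n * 'I_m) * ('I_n * 'I_m)} :=
  [set xy | ((xy.1.1 == xy.2.1) && (xy.1.2 != xy.2.2)) ||
            (e xy.1.1 xy.2.1 && (xy.1.2 == xy.2.2))].

Lemma canonical_cover_is_mcover : is_mcover e canonical_cover.
Proof.
have neq_edge u v : e u v -> (u == v) = false.
  by move=> euv; apply: contraTF euv => /eqP ->; rewrite eirr.
apply/and5P; split.
- apply/forallP => -[u i]; apply/forallP => -[v j]; apply/implyP; rewrite !inE /=.
  by rewrite esym (eq_sym u) (eq_sym i).
- by apply/forallP => -[u i]; rewrite !inE /= !eqxx eirr.
- apply/forallP => u; apply/forallP => i; apply/forallP => j; apply/implyP => ij.
  by rewrite !inE /= eqxx ij.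
- apply/forallP => u; apply/forallP => v; apply/forallP => i; apply/forallP => j.
  by apply/implyP; rewrite !inE /= => /andP[/negbTE -> /=] /andP[].
- apply/forallP => u; apply/forallP => v; apply/implyP => euv.
  apply/andP; split.
    apply/forallP => i; apply/forallP => j; apply/forallP => j'; apply/implyP.
    by rewrite !inE /= neq_edge // euv => /andP[/eqP <- /eqP ->].
  apply/forallP => i; apply/forallP => i'; apply/forallP => j; apply/implyP.
  by rewrite !inE /= neq_edge // euv => /andP[/eqP -> /eqP ->].
Qed.

Lemma canonical_cover_colorings : num_cover_colorings canonical_cover = chrom_poly e m.
Proof.
rewrite (cover_colorings_graph canonical_cover_is_mcover).
apply: eq_card => f; rewrite !inE; apply: eq_forallb => u; apply: eq_forallb => v.
rewrite !inE /=; have [->|_] /= := eqVneq u v; first by rewrite eqxx eirr.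
by case: (e u v); case: (f u == f v).
Qed.

End CanonicalCover.

(* 2 ^ (n * m), the default value in the definition of dp_chrom, bounds the
   number of all m-colorings. *)
Lemma card_colorings_le (n m : nat) : m ^ n <= 2 ^ (n * m).
Proof. by rewrite mulnC expnM; case: n => // n; rewrite leq_exp2r // ltnW // ltn_expl. Qed.

Lemma dp_chrom_le_chrom (n m : nat) (e : rel 'I_n) : symmetric e -> irreflexive e ->
  dp_chrom e m <= chrom_poly e m.
Proof.
move=> esym eirr; rewrite /dp_chrom -canonical_cover_colorings // -minEnat.
exact: (bigmin_le_cond _ (@num_cover_colorings n m) (canonical_cover_is_mcover m esym eirr)).
Qed.

Lemma chrom_le_dp_chrom (n m : nat) (e : rel 'I_n) : symmetric e -> irreflexive e ->
  chrom_poly e m <= dp_chrom e m + #|offdiag (edges e)| * m ^ (n - 2).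
Proof.
move=> esym eirr; rewrite addnC -leq_subLR /dp_chrom -minEnat -leEnat.
apply: le_bigmin => [|EH cover]; rewrite leEnat leq_subLR addnC.
  apply: leq_trans (leq_addr _ _); apply: leq_trans (card_colorings_le n m).
  by rewrite /chrom_poly (leq_trans (max_card _)) // card_ffun !card_ord.
exact: chrom_poly_le_cover.
Qed.

Lemma offdiag_edges_small (n : nat) (e : rel 'I_n) : n < 2 -> #|offdiag (edges e)| = 0.
Proof.
move=> n_lt2; apply/eqP; rewrite cards_eq0; apply/eqP/setP => -[[u v] q].
rewrite !inE /=; apply/negP => /andP[/andP[/andP[lt_uv _] _] _].
by have := ltn_ord v; lia.
Qed.

Local Open Scope ring_scope.

Theorem mainTheorem3 (n : nat) (e : rel 'I_n) (esym : symmetric e)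
    (eirr : irreflexive e) :
  exists (C : rat) (M : nat), forall m : nat, (M <= m)%N ->
    `| (chrom_poly e m)%:R - (dp_chrom e m)%:R | <= C * (m%:R : rat) ^ (n%:Z - 2).
Proof.
pose K := #|offdiag (edges e)|.
exists K%:R, 0%N => m _.
have -> : K%:R * (m%:R : rat) ^ (n%:Z - 2) = (K * m ^ (n - 2))%:R.
  have [n_lt2|n_ge2] := ltnP n 2; first by rewrite /K offdiag_edges_small // mul0r mul0n.
  by rewrite subzn // natrM natrX.
rewrite ger0_norm ?subr_ge0 ?ler_nat ?dp_chrom_le_chrom //.
by rewrite lerBlDl -natrD ler_nat chrom_le_dp_chrom.
Qed.
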